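(* Let $X$ be a metric space, $\mathcal M=\{M_1,\dots,M_n\}\subset\mathcal P^f_{\mathrm{Cl}}(X)$, $\Sigma(\mathcal M)\ne\emptyset$ and $d\in\Omega(\mathcal M)$. Let $K_1,K_2\in\Sigma_d(\mathcal M)$ with $K_1\subset K_2$. Then every $K\in\mathcal P^f_{\mathrm{Cl}}(X)$ with $K_1\subset K\subset K_2$ belongs to $\Sigma_d(\mathcal M)$.
   Context: For a metric space $X$, $p\in X$, $A\subset X$: $|p\,A|=\inf_{a\in A}|p\,a|$ ($=\infty$ if $A=\emptyset$); for $0\le r<\infty$, $B_r(A)=\{p:|p\,A|\le r\}$. For nonempty $A,B$, $d_H(A,B)=\max\{\sup_{a\in A}|a\,B|,\sup_{b\in B}|b\,A|\}\in[0,\infty]$. $\mathcal P_{\mathrm{Cl}}(X)$ is the set of nonempty closed subsets of $X$ with $d_H$. A finiteness class of $\mathcal P_{\mathrm{Cl}}(X)$ is an equivalence class of the relation $A\sim B\iff d_H(A,B)<\infty$; $\mathcal P^f_{\mathrm{Cl}}(X)$ denotes a fixed finiteness class. For finite $\mathcal M=\{M_1,\dots,M_n\}\subset\mathcal P^f_{\mathrm{Cl}}(X)$, set $S_{\mathcal M}(Y)=\sum_{i=1}^n d_H(Y,M_i)$ for $Y\in\mathcal P^f_{\mathrm{Cl}}(X)$; $\Sigma(\mathcal M)$ is the set of all minimizers of $S_{\mathcal M}$ over $\mathcal P^f_{\mathrm{Cl}}(X)$. For $K\in\Sigma(\mathcal M)$, $d(K)=(d_H(K,M_1),\dots,d_H(K,M_n))$;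 $\Omega(\mathcal M)=\{d(K):K\in\Sigma(\mathcal M)\}$; for $d=(d_1,\dots,d_n)\in\Omega(\mathcal M)$, $\Sigma_d(\mathcal M)=\{K\in\Sigma(\mathcal M):d(K)=d\}$, partially ordered by inclusion; and $K_d=\bigcap_{i=1}^n B_{d_i}(M_i)$. *)

From HB Require Import structures.
From mathcomp Require Import all_boot all_order all_algebra.
From mathcomp Require Import all_classical all_reals ereal.
Set Implicit Arguments. Unset Strict Implicit. Unset Printing Implicit Defensive.
Import Order.TTheory GRing.Theory Num.Theory.
Local Open Scope classical_set_scope.
Local Open Scope ring_scope.

Record metricSpace (R : realType) := MetricSpace {
  mcarrier :> Type;
  mdist : mcarrier -> mcarrier -> R;
  mdist_ge0 : forall x y, 0 <= mdist x y;
  mdist_eq0 : forall x y, mdist x y = 0 <-> x = y;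
  mdist_sym : forall x y, mdist x y = mdist y x;
  mdist_tri : forall x y z, mdist x z <= mdist x y + mdist y z }.

Section Hausdorff.
Variables (R : realType) (X : metricSpace R).
Local Open Scope ereal_scope.

(* |p A| = inf_{a in A} |p a|, = +oo if A is empty *)
Definition pdist (p : X) (A : set X) : \bar R :=
  ereal_inf [set (mdist p a)%:E | a in A].

Definition ball_set (r : R) (A : set X) : set X :=
  [set p | pdist p A <= r%:E].

Definition dH (A B : set X) : \bar R :=
  maxe (ereal_sup [set pdist a B | a in A])
       (ereal_sup [set pdist b A | b in B]).

Definition mclosed (A : set X) : Prop :=
  forall x : X, (forall e : R, (0 < e)%R -> exists2 a, A a & (mdist x a < e)%R) -> A x.

Definition PCl (A : set X) : Prop := A !=set0 /\ mclosed A.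

Definition fclass (F0 : set X) (A : set X) : Prop := PCl A /\ dH A F0 < +oo.

Definition S_M (n : nat) (M : 'I_n -> set X) (Y : set X) : \bar R :=
  \sum_(i < n) dH Y (M i).

Definition Sigma (F0 : set X) (n : nat) (M : 'I_n -> set X) (K : set X) : Prop :=
  fclass F0 K /\ forall Y, fclass F0 Y -> S_M M K <= S_M M Y.

Definition dvec (n : nat) (M : 'I_n -> set X) (K : set X) : 'I_n -> \bar R :=
  fun i => dH K (M i).

Definition Omega (F0 : set X) (n : nat) (M : 'I_n -> set X) (d : 'I_n -> \bar R) : Prop :=
  exists2 K, Sigma F0 M K & dvec M K = d.

Definition Sigma_d (F0 : set X) (n : nat) (M : 'I_n -> set X) (d : 'I_n -> \bar R)
  (K : set X) : Prop := Sigma F0 M K /\ dvec M K = d.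

End Hausdorff.

(* If K1 ⊂ K ⊂ K2, points of K lie in K2 and points of M_i are at least as close
   to K as to K1, so d_H(K, M_i) <= max (d_H(K2, M_i), d_H(K1, M_i)) = d_i.
   Hence S_M(K) <= S_M(K1), the minimum, and K is a minimizer.  The minimum is
   finite (it is at most S_M(F0)), and a componentwise inequality between two
   vectors with the same finite sum is an equality, so d(K) = d. *)

From Pilot Require Import Defs.
From HB Require Import structures.
From mathcomp Require Import all_boot all_order all_algebra.
From mathcomp Require Import all_classical all_reals ereal.
Import Order.TTheory GRing.Theory Num.Theory.
Local Open Scope classical_set_scope.
Local Open Scope ereal_scope.

Lemma lee_sum_eq {R : realDomainType} {I : finType} {f g : I -> \bar R} :
  (forall i, f i <= g i) -> \sum_i g i \is a fin_num ->
  \sum_i g i <= \sum_i f i -> f = g.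
Proof.
move=> le_fg gfin le_sum; apply/funext => j; apply/eqP; rewrite eq_le le_fg /=.
move: le_sum; rewrite (bigD1 j) //= [X in _ <= X](bigD1 j) //=.
set rg := \sum_(i | i != j) g i; set rf := \sum_(i | i != j) f i.
have rgfin : rg \is a fin_num.
  by apply/sum_fin_numP => i _ _; move/sum_fin_numP : gfin; exact.
have le_rest : rf <= rg by apply: lee_sum => i _; apply: le_fg.
by move=> /le_trans /(_ (leeD2l (f j) le_rest)); rewrite leeD2rE.
Qed.

Section HausdorffDistance.
Context {R : realType} {X : metricSpace R}.

Lemma pdist_ge0 (p : X) (A : set X) : 0 <= pdist p A.
Proof. by apply: le_ereal_inf_tmp => _ [a _ <-]; rewrite lee_fin; exact: Defs.mdist_ge0. Qed.

Lemma le_pdist (p : X) {A B : set X} : A `<=` B -> pdist p B <= pdist p A.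
Proof. by move=> AB; apply: ereal_inf_le_tmp => _ [a Aa <-]; exists a => //; apply: AB. Qed.

Lemma dH_ge0 (A B : set X) : A !=set0 -> 0 <= dH A B.
Proof.
case=> a Aa; rewrite /dH le_max; apply/orP; left.
by apply: le_trans (pdist_ge0 a B) (ereal_sup_ubound _); exists a.
Qed.

Lemma dH_self_le0 (A : set X) : dH A A <= 0.
Proof.
rewrite /dH maxxx; apply: ge_ereal_sup => _ [a Aa <-].
apply: le_trans (ereal_inf_lbound _) _; first by exists a.
by rewrite lee_fin (proj2 (Defs.mdist_eq0 a a)).
Qed.

Lemma dH_between {K1 K K2 : set X} (B : set X) : K1 `<=` K -> K `<=` K2 ->
  dH K B <= maxe (dH K2 B) (dH K1 B).
Proof.
move=> K1K KK2.
have sup_K : ereal_sup [set pdist a B | a in K] <= ereal_sup [set pdist a B | a in K2].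
  by apply: ereal_sup_le => _ [a Ka <-]; exists a => //; apply: KK2.
have sup_B : ereal_sup [set pdist b K | b in B] <= ereal_sup [set pdist b K1 | b in B].
  apply: ge_ereal_sup => _ [b Bb <-].
  by apply: le_trans (le_pdist b K1K) (ereal_sup_ubound _); exists b.
by rewrite /dH !ge_max !le_max sup_K sup_B !orbT.
Qed.

End HausdorffDistance.

Section Minimizers.
Context {R : realType} {X : metricSpace R} {F0 : set X} {n : nat} {M : 'I_n -> set X}.
Hypotheses (F0_PCl : PCl F0) (M_fclass : forall i, fclass F0 (M i)).

Lemma fclass_refl : fclass F0 F0.
Proof. by split => //; apply: le_lt_trans (dH_self_le0 F0) _. Qed.

Lemma S_M_Sigma_fin_num {K : set X} : Sigma F0 M K -> S_M M K \is a fin_num.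
Proof.
case=> [[[K0 _] _] Kmin]; rewrite ge0_fin_numE.
- apply: le_lt_trans (Kmin _ fclass_refl) _.
  by apply: lte_sum_pinfty => i _; rewrite /dH maxC; exact: (M_fclass i).2.
- by apply: sume_ge0 => i _; exact: dH_ge0.
Qed.

End Minimizers.

Theorem mainTheorem10 (R : realType) (X : metricSpace R) (F0 : set X)
  (HF0 : PCl F0) (n : nat) (M : 'I_n -> set X)
  (HM : forall i, fclass F0 (M i))
  (HSigma : exists K, Sigma F0 M K)
  (d : 'I_n -> \bar R) (Hd : Omega F0 M d)
  (K1 K2 : set X) (HK1 : Sigma_d F0 M d K1) (HK2 : Sigma_d F0 M d K2)
  (H12 : K1 `<=` K2) :
  forall K : set X, fclass F0 K -> K1 `<=` K -> K `<=` K2 -> Sigma_d F0 M d K.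
Proof.
move=> K HK K1K KK2; case: HK1 => [SigmaK1 dK1]; case: HK2 => [_ dK2].
have le_dvec i : dvec M K i <= dvec M K1 i.
  apply: le_trans (dH_between (M i) K1K KK2) _.
  by rewrite -/(dvec M K2 i) -/(dvec M K1 i) dK1 dK2 maxxx.
have le_S : S_M M K <= S_M M K1 by apply: lee_sum => i _; exact: le_dvec.
split; first by split=> // Y HY; apply: le_trans le_S (SigmaK1.2 Y HY).
rewrite -dK1; apply: lee_sum_eq le_dvec _ (SigmaK1.2 K HK).
by have := S_M_Sigma_fin_num HF0 HM SigmaK1.
Qed.
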